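(* Let $k\ge 3$ be an integer and let $G=(G_1,v_1,e_1)\Delta(G_2,v_2,e_2)$ be a Hajós join of two hypergraphs $G_1$ and $G_2$. Then $G\in\mathcal{C}_k$ if and only if both $G_1\in\mathcal{C}_k$ and $G_2\in\mathcal{C}_k$.
   Context: A hypergraph is a pair $G=(V,E)$ of finite sets with $E\subseteq 2^V$ and $|e|\ge2$ for all $e\in E$. A coloring requires every edge to contain two vertices of different colors; $\chi$ is the chromatic number. $G$ is $(k+1)$-critical if $\chi(G)=k+1$ but $\chi(H)\le k$ for every proper subhypergraph $H$. A $(v,w)$-hyperpath is a sequence $(v_1,e_1,\dots,e_{q-1},v_q)$ of distinct vertices and distinct edges with $v_1=v,v_q=w$, $\{v_i,v_{i+1}\}\subseteq e_i$; $\lambda_G(v,w)$ is the maximum number of pairwise edge-disjoint $(v,w)$-hyperpaths and $\lambda(G)=\max_{v\ne w}\lambda_G(v,w)$. $\mathcal{C}_k$ is the class of $(k+1)$-critical hypergraphs $H$ with $\lambda(H)\le k$. Hajós join $(G_1,v_1,e_1)\Delta(G_2,v_2,e_2)$: for vertex-disjoint $G_1,G_2$, $e_i\in E(G_i)$, $v_i\in e_i$, delete $e_1,e_2$, identify $v_1,v_2$ into a new vertex $v^*$, and add a new edge $e^*$ equal to $(e_1\cup e_2)\setminus\{v_1,v_2\}$ or to $((e_1\cup e_2)\setminus\{v_1,v_2\})\cup\{v^*\}$. *)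

From mathcomp Require Import all_boot.
Set Implicit Arguments. Unset Strict Implicit. Unset Printing Implicit Defensive.

Section Hyper.
Variable T : finType.

Definition is_hypergraph (V : {set T}) (E : {set {set T}}) : Prop :=
  forall e, e \in E -> e \subset V /\ 2 <= #|e|.

Definition colorable (V : {set T}) (E : {set {set T}}) (k : nat) : Prop :=
  exists c : T -> nat, (forall x, x \in V -> c x < k) /\
    forall e, e \in E -> exists x y, [/\ x \in e, y \in e & c x <> c y].

Definition chi_is (V : {set T}) (E : {set {set T}}) (n : nat) : Prop :=
  colorable V E n /\ forall m, colorable V E m -> n <= m.

Definition proper_sub (V' : {set T}) (E' : {set {set T}})
    (V : {set T}) (E : {set {set T}}) : Prop :=
  [/\ is_hypergraph V' E', V' \subset V, E' \subset E & (V', E') <> (V, E)].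

Definition critical (V : {set T}) (E : {set {set T}}) (k : nat) : Prop :=
  chi_is V E k.+1 /\
  forall V' E', proper_sub V' E' V E -> exists m, chi_is V' E' m /\ m <= k.

(* (v,w)-hyperpath (v_1,e_1,...,e_{q-1},v_q), given by the vertex sequence
   vs = [v_1..v_q] and the edge sequence es = [e_1..e_{q-1}]. *)
Definition hyperpath (E : {set {set T}}) (v w : T)
    (vs : seq T) (es : seq {set T}) : Prop :=
  [/\ size vs = (size es).+1, head v vs = v, last v vs = w,
      uniq vs & uniq es] /\
  all (fun e => e \in E) es /\
      (forall i, i < size es ->
        (nth v vs i \in nth set0 es i) && (nth v vs i.+1 \in nth set0 es i)).

Definition disjoint_paths (E : {set {set T}}) (v w : T) (m : nat) : Prop :=
  exists P : seq (seq T * seq {set T}),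
    [/\ size P = m,
        forall p, p \in P -> hyperpath E v w p.1 p.2 &
        pairwise (fun p q => all (fun e => e \notin q.2) p.2) P].

(* lambda(V,E) <= k, where lambda = max_{v<>w} lambda(v,w) and lambda(v,w)
   is the maximum number of pairwise edge-disjoint (v,w)-hyperpaths. *)
Definition lambda_le (V : {set T}) (E : {set {set T}}) (k : nat) : Prop :=
  forall v w, v \in V -> w \in V -> v <> w ->
    forall m, disjoint_paths E v w m -> m <= k.

Definition in_Ck (k : nat) (V : {set T}) (E : {set {set T}}) : Prop :=
  critical V E k /\ lambda_le V E k.

(* Hajós join: v1 and v2 are identified into v* := v1 (v2 is renamed v1);
   b selects whether v* belongs to the new edge e*. *)
Definition merge (v1 v2 : T) (x : T) : T := if x == v2 then v1 else x.

Definition hajos_V (V1 V2 : {set T}) (v1 v2 : T) : {set T} :=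
  (V1 :|: V2) :\ v2.

Definition hajos_estar (e1 e2 : {set T}) (v1 v2 : T) (b : bool) : {set T} :=
  ((e1 :|: e2) :\: [set v1; v2]) :|: (if b then [set v1] else set0).

Definition hajos_E (E1 E2 : {set {set T}}) (v1 : T) (e1 : {set T})
    (v2 : T) (e2 : {set T}) (b : bool) : {set {set T}} :=
  (E1 :\ e1) :|: [set merge v1 v2 @: (e : {set T}) | e in E2 :\ e2]
    :|: [set hajos_estar e1 e2 v1 v2 b].

End Hyper.

(* Colorings of G1 and G2 that agree on v1 and v2 glue to a coloring of the
   join; with at least three colors, permuting the colors of one factor makes
   e* bichromatic as soon as e1 or e2 is. Conversely, a coloring of the join
   restricts to G1 unless e1 is monochromatic, in which case e2 is monochromatic
   as well (G2 is not k-colorable) and then so is e*. These two facts carry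
   (k+1)-criticality across the join in both directions; a proper
   subhypergraph of G1 containing e1 is handled through the corresponding
   proper subhypergraph of the join.
   For the edge-connectivity bound, collapsing the G2 side of the join onto v1
   (or the G1 side onto v2) sends edge-disjoint hyperpaths of the join to
   edge-disjoint hyperpaths of a factor, and one of the two collapses keeps
   the endpoints apart. Conversely a hyperpath of G1 through e1 is rerouted
   through e* and a path of G2 - e2 from v2 to another vertex of e2; such a
   path exists by a Kempe chain argument, since G2 - e2 is k-colorable while
   G2 is not. The statement for G2 follows by exchanging the roles of the two
   factors. *)

From Pilot Require Import Defs.
From Stdlib Require Import Classical_Prop.
From mathcomp Require Import all_boot zify.
Set Implicit Arguments. Unset Strict Implicit. Unset Printing Implicit Defensive.

(** * Colorings *)

Definition swap (U : eqType) (a b z : U) : U :=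
  if z == a then b else if z == b then a else z.

Lemma swapK (U : eqType) (a b : U) : involutive (swap a b).
Proof.
move=> z; rewrite /swap.
have [->|za] := eqVneq z a; first by rewrite eqxx; case: eqVneq.
have [->|zb] := eqVneq z b; first by rewrite eqxx.
by rewrite (negbTE za) (negbTE zb).
Qed.

Lemma swap_inj (U : eqType) (a b : U) : injective (swap a b).
Proof. exact: inv_inj (swapK a b). Qed.

Lemma swapL (U : eqType) (a b : U) : swap a b a = b.
Proof. by rewrite /swap eqxx. Qed.

Lemma swap_id (U : eqType) (a b z : U) : z != a -> z != b -> swap a b z = z.
Proof. by rewrite /swap => /negbTE -> /negbTE ->. Qed.

Lemma swap_lt a b z K : a < K -> b < K -> z < K -> swap a b z < K.
Proof. by rewrite /swap; case: ifP => // _; case: ifP. Qed.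

Lemma other_color a K : 2 <= K -> exists2 g, g < K & g != a.
Proof. by move=> K2; exists (if a == 0 then 1 else 0); case: a; case: K K2 => [|[]]. Qed.

Lemma third_color a b : exists g, [/\ g < 3, g != a & g != b].
Proof.
exists (if (a != 0) && (b != 0) then 0 else if (a != 1) && (b != 1) then 1 else 2).
by case: a => [|[|a]]; case: b => [|[|b]].
Qed.

Section Colorings.
Variable T : finType.
Implicit Types (V e : {set T}) (E : {set {set T}}) (c : T -> nat) (v : T).

Definition bichromatic c (e : {set T}) :=
  exists x y, [/\ x \in e, y \in e & c x <> c y].

Lemma bichromatic_inj f c e : injective f -> bichromatic c e -> bichromatic (f \o c) e.
Proof. by move=> f_inj [x [y [xe ye cxy]]]; exists x, y; split=> // /f_inj. Qed.

Lemma bichromatic_imset (h : T -> T) c (e : {set T}) :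
  bichromatic c (h @: e) -> bichromatic (c \o h) e.
Proof. by move=> [_ [_ [/imsetP [x xe ->] /imsetP [y ye ->] cxy]]]; exists x, y. Qed.

Lemma bichromatic_other c e v :
  bichromatic c e -> v \in e -> exists2 x, x \in e & c x <> c v.
Proof.
move=> [x [y [xe ye cxy]]] ve.
have [cxv|/eqP] := eqVneq (c x) (c v); last by exists x.
by exists y => // cyv; apply: cxy; rewrite cxv cyv.
Qed.

Lemma monochromatic_eq c e v :
  ~ bichromatic c e -> v \in e -> {in e, forall x, c x = c v}.
Proof.
move=> mono ve x xe; have [//|/eqP cxv] := eqVneq (c x) (c v).
by case: mono; exists x, v.
Qed.

Lemma bichromatic_update c v g e :
  v \notin e -> bichromatic c e -> bichromatic (fun z => if z == v then g else c z) e.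
Proof.
move=> ve [x [y [xe ye cxy]]]; exists x, y; split=> //.
have ne z : z \in e -> (z == v) = false by move=> ze; apply: contraNF ve => /eqP <-.
by rewrite !ne.
Qed.

Lemma other_vertex (e : {set T}) v : 2 <= #|e| -> exists2 w, w \in e & w != v.
Proof.
move=> e2; have : 0 < #|e :\ v|.
  by move: e2; rewrite (cardsD1 v e); case: (v \in e); rewrite /= ?add1n ?add0n // => /ltnW.
by case/card_gt0P => w; rewrite !inE => /andP [wv we]; exists w.
Qed.

Lemma colorableW V E K K' : K <= K' -> colorable V E K -> colorable V E K'.
Proof. by move=> leK [c [cV cE]]; exists c; split=> // x /cV /leq_trans; apply. Qed.

Lemma colorableS V E V' E' K :
  colorable V E K -> V' \subset V -> E' \subset E -> colorable V' E' K.
Proof.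
move=> [c [cV cE]] /subsetP sV /subsetP sE; exists c.
by split=> [x /sV|e /sE]; [apply: cV|apply: cE].
Qed.

Lemma colorable_chi V E K : colorable V E K -> exists m, chi_is V E m /\ m <= K.
Proof.
elim: K => [|K IH] colK; first by exists 0.
have [/IH [m [chim leK]]|ncolK] := classic (colorable V E K); first by exists m; split=> //; lia.
exists K.+1; split=> //; split=> // m colm; rewrite ltnNge; apply/negP => lemK.
exact/ncolK/(colorableW lemK).
Qed.

Lemma critical_iff V E k : critical V E k <->
  [/\ colorable V E k.+1, ~ colorable V E k &
      forall V' E', Defs.proper_sub V' E' V E -> colorable V' E' k].
Proof.
split=> [[[colk1 chimin] sub]|[colk1 ncolk sub]].
  split=> // [/chimin|V' E' /sub [m [[colm _] lemk]]]; first by rewrite ltnn.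
  exact: colorableW colm.
split=> [|V' E' /sub /colorable_chi //]; split=> // m colm.
by rewrite ltnNge; apply/negP => lemk; exact/ncolk/(colorableW lemk).
Qed.

End Colorings.

(** * Hyperpaths *)

Section Hyperpaths.
Variable T : finType.
Implicit Types (V e f : {set T}) (E : {set {set T}}) (S : pred {set T}).

Definition edge_rel S : rel T :=
  fun u v => [exists e : {set T}, [&& S e, u \in e & v \in e]].

Lemma edge_rel_sym S : symmetric (edge_rel S).
Proof.
by move=> u v; apply/existsP/existsP => -[e /and3P [Se ue ve]]; exists e; rewrite Se ue ve.
Qed.

Lemma connect_in_edge S e u v : S e -> u \in e -> v \in e -> connect (edge_rel S) u v.
Proof. by move=> Se ue ve; apply/connect1/existsP; exists e; rewrite Se ue ve. Qed.

Lemma connect_edge_relW S S' u v : (forall e, S e -> S' e) ->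
  connect (edge_rel S) u v -> connect (edge_rel S') u v.
Proof.
move=> SS'; apply: connect_sub => a a' /existsP [e /and3P [Se ae a'e]].
by apply/connect1/existsP; exists e; rewrite ae a'e SS'.
Qed.

Lemma connect_homo (h : T -> T) (R R' : rel T) a b :
  {homo h : u v / R u v >-> R' u v} -> connect R a b -> connect R' (h a) (h b).
Proof.
move=> hR /connectP [p pth ->]; elim: p a pth => [|x p IH] a //= /andP [Rax pth].
exact: connect_trans (connect1 (hR _ _ Rax)) (IH _ pth).
Qed.

(* The start vertex [v] of the walk is not listed in [vs]. *)
Fixpoint hwalk v (vs : seq T) (es : seq {set T}) : bool :=
  match vs, es with
  | [::], [::] => true
  | w :: vs', f :: es' => [&& v \in f, w \in f & hwalk w vs' es']
  | _, _ => false
  end.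

Lemma hwalk_size v vs es : hwalk v vs es -> size vs = size es.
Proof. by elim: vs v es => [|w vs IH] v [|f es] //= /and3P [_ _ /IH ->]. Qed.

Lemma hwalk_nth x0 v vs es i : hwalk v vs es -> i < size es ->
  (nth x0 (v :: vs) i \in nth set0 es i) && (nth x0 (v :: vs) i.+1 \in nth set0 es i).
Proof.
elim: vs v es i => [|w vs IH] v [|f es] [|i] //= /and3P [vf wf wlk]; first by rewrite vf wf.
exact: IH.
Qed.

Lemma hwalk_edge v vs es f : hwalk v vs es -> f \in es -> exists2 u, u \in vs & u \in f.
Proof.
elim: vs v es => [|w vs IH] v [|g es] //= /and3P [_ wg wlk].
rewrite inE => /predU1P [->|/(IH _ _ wlk) [u uvs uf]]; first by exists w; rewrite ?mem_head.
by exists u; rewrite // inE uvs orbT.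
Qed.

Lemma hwalk_hyperpath E v vs es : hwalk v vs es -> uniq (v :: vs) -> uniq es ->
  all (mem E) es -> hyperpath E v (last v vs) (v :: vs) es.
Proof.
move=> wlk uvs ues esE; do !split=> //=; first by rewrite (hwalk_size wlk).
by move=> i; apply: hwalk_nth.
Qed.

Lemma last_has_index (P : pred T) a p : has P p ->
  exists i, [/\ i < size p, P (nth a p i) & ~~ has P (drop i.+1 p)].
Proof.
elim: p => [|x p IH] //= /orP [Px|/IH [i [ip Pi nP]]]; last by exists i.+1.
case hP: (has P p); last by exists 0; rewrite Px drop0 hP.
by case: (IH hP) => i [ip Pi nP]; exists i.+1.
Qed.

Lemma path_last_neighbour S a p : path (edge_rel S) a p -> p != [::] ->
  exists z f q, [/\ S f, a \in f, z \in f, path (edge_rel S) z q & last a p = last z q]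
    /\ [/\ z \in p, size q < size p, {subset q <= p}
         & forall u, u \in q -> ~~ edge_rel S a u].
Proof.
case: p => [|x p0] // pth _; set p := x :: p0 in pth *.
have /(last_has_index a) [i [ip /existsP [f /and3P [Sf af zf]] nq]] : has (edge_rel S a) p.
  by rewrite /= (pathP a pth 0).
set z := nth a p i in zf; set q := drop i.+1 p in nq.
have ep : p = take i p ++ z :: q by rewrite /z /q -drop_nth // cat_take_drop.
exists z, f, q; split; first split=> //.
- by move: pth; rewrite ep cat_path => /andP [_ /= /andP [_ ->]].
- by rewrite ep last_cat.
split=> [|||u uq]; rewrite /q ?size_drop; [exact: mem_nth|lia|exact: mem_drop|].
by apply: contra nq => au; apply/hasP; exists u.
Qed.

(* Jumping each time to the last neighbour along the path makes both the
   vertices and the edges of the resulting walk distinct. *)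
Lemma hwalk_of_path S n a p : size p <= n -> path (edge_rel S) a p ->
  exists vs es, [/\ hwalk a vs es, last a vs = last a p, uniq (a :: vs), uniq es
                  & all S es] /\ {subset vs <= p}.
Proof.
elim: n a p => [|n IH] a p sp pth.
  by case: p sp {pth} => // _; exists [::], [::].
have [ea|na] := eqVneq a (last a p); first by exists [::], [::].
have p0 : p != [::] by apply: contraNneq na => ->.
have [z [f [q [[Sf af zf pq lq] [zp sq qp nq]]]]] := path_last_neighbour pth p0.
have az : a != z.
  apply: contra na => /eqP ea; rewrite lq -ea.
  case: q {lq sq qp} pq nq => [|y q] //= /andP [zy _] /(_ y (mem_head _ _)).
  by rewrite ea zy.
have [vs [es [[wlk lvs uvs ues Ses] vsq]]] := IH z q (leq_trans sq sp) pq.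
have aa : edge_rel S a a by apply/existsP; exists f; rewrite Sf af.
exists (z :: vs), (f :: es); split; [split|].
- by rewrite /= af zf wlk.
- by rewrite /= lvs lq.
- rewrite cons_uniq uvs andbT in_cons negb_or az /=.
  by apply/negP => /vsq aq; move: (nq a aq); rewrite aa.
- rewrite /= ues andbT; apply/negP => /(hwalk_edge wlk) [u /vsq uq uf].
  by move: (nq u uq); apply/negP/negPn/existsP; exists f; rewrite Sf af uf.
- by rewrite /= Sf.
- by move=> u; rewrite inE => /predU1P [->|/vsq /qp].
Qed.

Lemma hyperpath_of_connect E S a b : (forall e, S e -> e \in E) ->
  connect (edge_rel S) a b -> a != b ->
  exists vs es, hyperpath E a b vs es /\ all S es.
Proof.
move=> SE /connectP [p pth ->] ab.
have [vs [es [[wlk lvs uvs ues Ses] _]]] := hwalk_of_path (leqnn _) pth.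
exists (a :: vs), es; split=> //; rewrite -lvs; apply: hwalk_hyperpath => //.
by apply/allP => e /(allP Ses) /SE.
Qed.

Lemma connect_hyperpath E v w vs es (R : rel T) (h : T -> T) :
  hyperpath E v w vs es ->
  (forall f, f \in es -> {in f &, forall u u', connect R (h u) (h u')}) ->
  connect R (h v) (h w).
Proof.
move=> [[svs hvs lvs _ _] [_ steps]] Rf.
suff conn i : i <= size es -> connect R (h v) (h (nth v vs i)).
  by have := conn _ (leqnn _); rewrite -lvs -nth_last svs.
elim: i => [|i IH] ilt; first by case: vs svs hvs {lvs steps} => //= x vs _ ->.
apply: connect_trans (IH (ltnW ilt)) _.
have /andP [vi vi1] := steps i ilt.
by apply: (Rf (nth set0 es i)) => //; apply: mem_nth.
Qed.

(* [lift f e]: the edge [e] of [E'] is one of those replacing the edge [f] of [E]. *)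
Section LiftPaths.
Variables (E E' : {set {set T}}) (h : T -> T) (lift : {set T} -> pred {set T}).
Variables x y : T.
Hypothesis lift_edge : forall f, f \in E -> {subset lift f <= mem E'}.
Hypothesis lift_connect : forall f, f \in E ->
  {in f &, forall u u', connect (edge_rel (lift f)) (h u) (h u')}.
Hypothesis lift_disjoint : forall f g e, f \in E -> g \in E -> f != g ->
  lift f e -> lift g e -> False.
Hypothesis hxy : h x != h y.

Definition edge_disjoint (p q : seq T * seq {set T}) := all (fun e => e \notin q.2) p.2.

Definition lifted (p p' : seq T * seq {set T}) := all (fun e => has (lift^~ e) p.2) p'.2.

Lemma hyperpath_lift p : hyperpath E x y p.1 p.2 ->
  exists vs es, hyperpath E' (h x) (h y) vs es /\ lifted p (vs, es).
Proof.
move=> hpp; have pE : {subset p.2 <= mem E} by case: hpp => _ [/allP].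
suff [vs [es [hvs les]]] : exists vs es,
    hyperpath E' (h x) (h y) vs es /\ all (fun e => has (lift^~ e) p.2) es by exists vs, es.
apply: hyperpath_of_connect => //.
  by move=> e /hasP [f /pE fE /(lift_edge fE)].
apply: (connect_hyperpath hpp) => f fp u u' uf u'f.
apply: connect_edge_relW (lift_connect (pE _ fp) uf u'f) => e fe.
by apply/hasP; exists f.
Qed.

Lemma disjoint_hyperpaths_lift P :
  (forall p, p \in P -> hyperpath E x y p.1 p.2) -> pairwise edge_disjoint P ->
  exists P', [/\ size P' = size P,
    forall p', p' \in P' -> hyperpath E' (h x) (h y) p'.1 p'.2,
    pairwise edge_disjoint P' & forall p', p' \in P' -> exists2 p, p \in P & lifted p p'].
Proof.
elim: P => [|p P IH] hP; first by exists [::].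
rewrite pairwise_cons => /andP [pP dP].
have hpp := hP p (mem_head _ _).
have [|P' [sP' hP' dP' lP']] := IH _ dP; first by move=> q qP; apply: hP; rewrite inE qP orbT.
have [vs [es [hvs les]]] := hyperpath_lift hpp.
exists ((vs, es) :: P'); split=> [|p'|| p'].
- by rewrite /= sP'.
- by rewrite inE => /predU1P [->|/hP'].
- rewrite pairwise_cons dP' andbT; apply/allP => q' /lP' [q qP lq].
  apply/allP => e ees; apply/negP => eq'.
  have /hasP [f fp Ffe] := allP les e ees; have /hasP [g gq Fge] := allP lq e eq'.
  have fE : f \in E by case: hpp => _ [/allP /(_ f fp)].
  have gE : g \in E by case: (hP q); rewrite ?inE ?qP ?orbT // => _ [/allP /(_ g gq)].
  apply: (lift_disjoint fE gE _ Ffe Fge); apply: contraTneq gq => <-.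
  exact: (allP (allP pP q qP) f fp).
- rewrite inE => /predU1P [->|/lP' [q qP lq]]; first by exists p; rewrite ?mem_head.
  by exists q; rewrite // inE qP orbT.
Qed.

Lemma disjoint_paths_lift n : disjoint_paths E x y n -> disjoint_paths E' (h x) (h y) n.
Proof.
move=> [P [<- hP dP]]; have [P' [sP' hP' dP' _]] := disjoint_hyperpaths_lift hP dP.
by exists P'.
Qed.

End LiftPaths.

End Hyperpaths.

(** * Critical hypergraphs *)

Section Critical.
Variable T : finType.
Implicit Types (V e f : {set T}) (E : {set {set T}}) (S : pred {set T}) (c : T -> nat).

Lemma bichromatic_kempe S c a b x f : S f -> bichromatic c f ->
  bichromatic (fun z => if connect (edge_rel S) x z then swap a b (c z) else c z) f.
Proof.
move=> Sf [u [w [uf wf cuw]]]; exists u, w; split=> //.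
have -> : connect (edge_rel S) x w = connect (edge_rel S) x u.
  by apply/idP/idP => /connect_trans; apply; apply: connect_in_edge Sf _ _.
by case: ifP => _ // /swap_inj.
Qed.

(* Otherwise exchanging two colors on the component of [v] in [E :\ e] would
   make [e] bichromatic (a Kempe chain argument). *)
Lemma uncolorable_connect_other V E e v K :
  is_hypergraph V E -> 2 <= K -> e \in E -> v \in e ->
  ~ colorable V E K -> colorable V (E :\ e) K ->
  exists2 y, (y \in e) && (y != v) & connect (edge_rel (mem (E :\ e))) v y.
Proof.
move=> hypE K2 eE ve ncol [c [cV cE]].
have [eV e2] := hypE e eE.
have [//|nconn] := classic (exists2 y, (y \in e) && (y != v) &
  connect (edge_rel (mem (E :\ e))) v y).
have mono : ~ bichromatic c e.
  move=> bic; apply: ncol; exists c; split=> // f fE.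
  by have [->//|fe] := eqVneq f e; apply: cE; rewrite !inE fe.
have [g gK gv] := other_color (c v) K2.
case: ncol; exists (fun z => if connect (edge_rel (mem (E :\ e))) v z
  then swap (c v) g (c z) else c z); split.
  move=> z zV; case: ifP => _; last exact: cV.
  by apply: swap_lt; [apply/cV/(subsetP eV)|exact: gK|exact: cV].
move=> f fE; have [->|fe] := eqVneq f e; last first.
  have fE' : f \in E :\ e by rewrite !inE fe.
  exact: bichromatic_kempe fE' (cE _ fE').
have [y ye yv] := other_vertex v e2.
exists v, y; split=> //; rewrite connect0 swapL.
case: ifP => [cy|_]; first by case: nconn; exists y; rewrite ?ye.
by rewrite (monochromatic_eq mono ve ye); apply/eqP.
Qed.

Lemma critical_delete_edge V E k f :
  critical V E k -> is_hypergraph V E -> f \in E -> colorable V (E :\ f) k.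
Proof.
move=> /critical_iff [_ _ sub] hypE fE; apply: sub; split=> //.
- by move=> e; rewrite !inE => /andP [_ /hypE].
- exact: subD1set.
- by case=> /setP /(_ f); rewrite !inE eqxx fE.
Qed.

Lemma critical_vertex_in_edge V E k z :
  critical V E k -> is_hypergraph V E -> 0 < k -> z \in V -> exists2 f, f \in E & z \in f.
Proof.
move=> /critical_iff [_ ncol sub] hypE k0 zV.
have [//|nf] := classic (exists2 f, f \in E & z \in f).
have zf f : f \in E -> z \notin f by move=> fE; apply/negP => zf; apply: nf; exists f.
have [|c [cV cE]] := sub (V :\ z) E.
  split=> //; last by case=> /setP /(_ z); rewrite !inE eqxx zV.
  - move=> e eE; have [eV e2] := hypE e eE; split=> //.
    apply/subsetP => w we; rewrite !inE (subsetP eV _ we) andbT.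
    by apply: contraNneq (zf e eE) => <-.
  - exact: subD1set.
case: ncol; exists (fun w => if w == z then 0 else c w); split.
  by move=> w wV; case: ifP => // /negbT wz; apply: cV; rewrite !inE wz.
by move=> e eE; apply: bichromatic_update; [apply: zf|apply: cE].
Qed.

Lemma critical_vertex_in_other_edge V E k e v :
  critical V E k -> is_hypergraph V E -> 2 <= k -> e \in E -> v \in e ->
  exists2 f, f \in E :\ e & v \in f.
Proof.
move=> crit hypE k2 eE ve.
have [//|nf] := classic (exists2 f, f \in E :\ e & v \in f).
have [c [cV cE]] := critical_delete_edge crit hypE eE.
have [eV e2] := hypE e eE.
have [w we wv] := other_vertex v e2.
have [g gk gw] := other_color (c w) k2.
case/critical_iff: crit => _ ncol _; case: ncol.
exists (fun z => if z == v then g else c z); split.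
  by move=> z zV; case: ifP => // _; apply: cV.
move=> f fE; have [->|fe] := eqVneq f e.
  by exists v, w; split=> //; rewrite eqxx (negbTE wv); apply/eqP.
have fE' : f \in E :\ e by rewrite !inE fe.
by apply: bichromatic_update (cE f fE'); apply/negP => vf; apply: nf; exists f.
Qed.

End Critical.

(** * Relabelling by an involution *)

Lemma mem_imset_invol (U : finType) (g : U -> U) (S : {set U}) z :
  involutive g -> (z \in g @: S) = (g z \in S).
Proof. by move=> gK; rewrite (can_imset_pre _ gK) inE. Qed.

Lemma imset_invol (U : finType) (g : U -> U) (S : {set U}) :
  involutive g -> g @: (g @: S) = S.
Proof. by move=> gK; apply/setP => z; rewrite !mem_imset_invol // gK. Qed.

Section Involution.
Variables (T : finType) (r : T -> T).
Hypothesis rK : involutive r.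
Implicit Types (V e f : {set T}) (E : {set {set T}}).

Definition edge_image E := [set r @: (e : {set T}) | e in E].

Lemma imset_edge_invol : involutive (fun e : {set T} => r @: e).
Proof. by move=> e; rewrite imset_invol. Qed.

Lemma mem_edge_image E f : (f \in edge_image E) = (r @: f \in E).
Proof. exact/mem_imset_invol/imset_edge_invol. Qed.

Lemma edge_imageK E : edge_image (edge_image E) = E.
Proof. exact/imset_invol/imset_edge_invol. Qed.

Lemma hypergraph_image V E : is_hypergraph V E -> is_hypergraph (r @: V) (edge_image E).
Proof.
move=> hypE f /imsetP [e /hypE [eV e2] ->]; split; first exact: imsetS.
by rewrite card_imset //; apply: inv_inj.
Qed.

Lemma colorable_image V E K : colorable V E K -> colorable (r @: V) (edge_image E) K.
Proof.
move=> [c [cV cE]]; exists (c \o r); split=> [x|f /imsetP [e /cE [x [y [xe ye cxy]]] ->]].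
  by rewrite mem_imset_invol //; apply: cV.
by exists (r x), (r y); rewrite /= !rK !imset_f.
Qed.

Lemma proper_sub_image V' E' V E : Defs.proper_sub V' E' (r @: V) (edge_image E) ->
  Defs.proper_sub (r @: V') (edge_image E') V E.
Proof.
move=> [hypE' sV sE ne]; split.
- exact: hypergraph_image.
- by rewrite -(imset_invol V rK) imsetS.
- by rewrite -(edge_imageK E) imsetS.
- by case=> eV eE; apply: ne; rewrite -eV -eE imset_invol // edge_imageK.
Qed.

Lemma critical_image V E k : critical V E k -> critical (r @: V) (edge_image E) k.
Proof.
move=> /critical_iff [colk1 ncolk sub]; apply/critical_iff; split.
- exact: colorable_image.
- by move=> /colorable_image; rewrite imset_invol // edge_imageK.
- by move=> V' E' /proper_sub_image /sub /colorable_image; rewrite imset_invol // edge_imageK.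
Qed.

Lemma lambda_le_image V E k : lambda_le V E k -> lambda_le (r @: V) (edge_image E) k.
Proof.
move=> lamE x y xV yV xy n paths.
have rxy : r x != r y by apply/eqP => /(inv_inj rK).
apply: (lamE (r x) (r y)); rewrite -?mem_imset_invol //; first exact/eqP.
apply: (disjoint_paths_lift (lift := fun f e => e == r @: f)) paths => //.
- by move=> f; rewrite mem_edge_image => fE e /eqP ->.
- by move=> f _ u u' uf u'f; apply: (connect_in_edge (e := r @: f)); rewrite ?imset_f.
- by move=> f g e _ _ fg /eqP -> /eqP /(inv_inj imset_edge_invol) gf; rewrite gf eqxx in fg.
Qed.

Lemma in_Ck_image k V E : in_Ck k V E -> in_Ck k (r @: V) (edge_image E).
Proof. by move=> [crit lam]; split; [apply: critical_image|apply: lambda_le_image]. Qed.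

End Involution.

(** * The Hajós join *)

Section HajosJoin.
Variables (T : finType) (V1 V2 : {set T}) (E1 E2 : {set {set T}}).
Variables (v1 v2 : T) (e1 e2 : {set T}) (b : bool).
Hypotheses (hyp1 : is_hypergraph V1 E1) (hyp2 : is_hypergraph V2 E2).
Hypothesis disjV : [disjoint V1 & V2].
Hypotheses (e1E1 : e1 \in E1) (v1e1 : v1 \in e1) (e2E2 : e2 \in E2) (v2e2 : v2 \in e2).
Implicit Types (f g : {set T}) (c : T -> nat).

(* [v1] plays the role of the paper's [v*]; [A] and [B] are the edges inherited
   from [G1] and [G2], and [estar] is the new edge [e*]. *)
Local Notation m := (Defs.merge v1 v2).
Local Notation A := (E1 :\ e1).
Local Notation B := [set m @: (e : {set T}) | e in E2 :\ e2].
Local Notation estar := (hajos_estar e1 e2 v1 v2 b).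
Local Notation V := (hajos_V V1 V2 v1 v2).
Local Notation E := (hajos_E E1 E2 v1 e1 v2 e2 b).

Lemma e1_subset_V1 : e1 \subset V1. Proof. by case: (hyp1 e1E1). Qed.
Lemma e2_subset_V2 : e2 \subset V2. Proof. by case: (hyp2 e2E2). Qed.
Lemma v1V1 : v1 \in V1. Proof. exact: (subsetP e1_subset_V1). Qed.
Lemma v2V2 : v2 \in V2. Proof. exact: (subsetP e2_subset_V2). Qed.
Lemma notin_V2 x : x \in V1 -> (x \in V2) = false. Proof. exact: disjointFr. Qed.
Lemma notin_V1 x : x \in V2 -> (x \in V1) = false. Proof. exact: disjointFl. Qed.
Lemma v1_neq_v2 : (v1 == v2) = false.
Proof. by apply: contraFF (notin_V2 v1V1) => /eqP ->; apply: v2V2. Qed.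

Lemma in_hajosV x : (x \in V) = (x != v2) && ((x \in V1) || (x \in V2)).
Proof. by rewrite !inE. Qed.

Lemma hajosV_V1 x : x \in V1 -> x \in V.
Proof.
by move=> xV1; rewrite in_hajosV xV1 andbT; apply: contraTneq xV1 => ->; rewrite notin_V1 ?v2V2.
Qed.

Lemma in_hajosE f : (f \in E) = [|| f \in A, f \in B | f == estar].
Proof. by rewrite !in_setU in_set1 orbA. Qed.

Lemma hajosE_A f : f \in A -> f \in E. Proof. by rewrite in_hajosE => ->. Qed.
Lemma hajosE_B g : g \in E2 :\ e2 -> m @: g \in E.
Proof. by move=> gE; rewrite in_hajosE imset_f ?orbT. Qed.
Lemma hajosE_estar : estar \in E. Proof. by rewrite in_hajosE eqxx !orbT. Qed.

Lemma A_subset_V1 f : f \in A -> f \subset V1. Proof. by rewrite !inE => /andP [_ /hyp1 []]. Qed.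
Lemma E2_subset_V2 g : g \in E2 :\ e2 -> g \subset V2.
Proof. by rewrite !inE => /andP [_ /hyp2 []]. Qed.

Lemma merge_v2 : m v2 = v1. Proof. by rewrite /Defs.merge eqxx. Qed.
Lemma merge_id z : z != v2 -> m z = z. Proof. by rewrite /Defs.merge => /negbTE ->. Qed.

Lemma hajosV_merge z : z \in V2 -> m z \in V.
Proof.
move=> zV2; have [->|zv2] := eqVneq z v2; first by rewrite merge_v2 hajosV_V1 ?v1V1.
by rewrite merge_id // in_hajosV zv2 zV2 orbT.
Qed.

Lemma in_estar x : (x \in estar) =
  ((x \in e1) || (x \in e2)) && (x != v1) && (x != v2) || b && (x == v1).
Proof.
rewrite /hajos_estar; case: b; rewrite !inE ?orbF;
by case: (x \in e1); case: (x \in e2); case: (x == v1); case: (x == v2).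
Qed.

Lemma estar_e1 x : x \in e1 -> x != v1 -> x \in estar.
Proof.
move=> xe1 xv1; rewrite in_estar xe1 xv1 /=; apply/orP; left.
by apply: contraTneq (subsetP e1_subset_V1 _ xe1) => ->; rewrite notin_V1 ?v2V2.
Qed.

Lemma estar_e2 x : x \in e2 -> x != v2 -> x \in estar.
Proof.
move=> xe2 xv2; rewrite in_estar xe2 xv2 orbT andbT /=; apply/orP; left.
by apply: contraTneq (subsetP e2_subset_V2 _ xe2) => ->; rewrite notin_V2 ?v1V1.
Qed.

Lemma estar_cases x : x \in estar ->
  [\/ (x \in e1) && (x != v1), (x \in e2) && (x != v2) | x = v1].
Proof.
rewrite in_estar => /orP [/andP [/andP [/orP [] xe xv1] xv2]|/andP [_ /eqP ->]].
- by constructor 1; rewrite xe xv1.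
- by constructor 2; rewrite xe xv2.
- by constructor 3.
Qed.

Lemma e1_other : exists2 x, x \in e1 & x != v1.
Proof. by have [_ ?] := hyp1 e1E1; apply: other_vertex. Qed.
Lemma e2_other : exists2 y, y \in e2 & y != v2.
Proof. by have [_ ?] := hyp2 e2E2; apply: other_vertex. Qed.

Lemma B_not_subset_V1 f : f \in B -> ~~ (f \subset V1).
Proof.
case/imsetP => g /setD1P [_ /hyp2 [gV2 g2]] ->.
have [z zg zv2] := other_vertex v2 g2.
apply/subsetPn; exists (m z); first exact: imset_f.
by rewrite merge_id // notin_V1 ?(subsetP gV2).
Qed.

Lemma estar_not_subset_V1 : ~~ (estar \subset V1).
Proof.
have [y ye2 yv2] := e2_other; apply/subsetPn; exists y; first exact: estar_e2.
by rewrite notin_V1 ?(subsetP e2_subset_V2).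
Qed.

Lemma hypergraph_merged g : g \in E2 :\ e2 -> m @: g \subset V /\ 2 <= #|m @: g|.
Proof.
move=> /setD1P [_ /hyp2 [/subsetP gV2 g2]]; split.
  by apply/subsetP => _ /imsetP [z zg ->]; apply/hajosV_merge/gV2.
rewrite card_in_imset // => x y /gV2 xV2 /gV2 yV2.
have m_V1 z : z \in V2 -> (m z \in V1) = (z == v2).
  move=> zV2; have [->|zv2] := eqVneq z v2; first by rewrite merge_v2 v1V1.
  by rewrite merge_id // notin_V1.
have [xv2|xv2] := eqVneq x v2; have [yv2|yv2] := eqVneq y v2; rewrite ?xv2 ?yv2 //.
- by move=> mxy; move: (m_V1 y yV2); rewrite -mxy merge_v2 v1V1 => /esym /eqP.
- by move=> mxy; move: (m_V1 x xV2); rewrite mxy merge_v2 v1V1 => /esym /eqP.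
- by rewrite !merge_id.
Qed.

Lemma hypergraph_estar : estar \subset V /\ 2 <= #|estar|.
Proof.
split.
  apply/subsetP => x /estar_cases [/andP [xe1 _]|/andP [xe2 xv2]|->].
  - exact/hajosV_V1/(subsetP e1_subset_V1).
  - by rewrite in_hajosV xv2 (subsetP e2_subset_V2) ?orbT.
  - exact/hajosV_V1/v1V1.
have [x xe1 xv1] := e1_other; have [y ye2 yv2] := e2_other.
have yx : y != x.
  by apply: contraTneq (subsetP e2_subset_V2 _ ye2) => ->; rewrite notin_V2 ?(subsetP e1_subset_V1).
by rewrite (cardsD1 x) (estar_e1 xe1 xv1) (cardsD1 y) in_setD1 (estar_e2 ye2 yv2) yx.
Qed.

Lemma hypergraph_hajos : is_hypergraph V E.
Proof.
move=> f; rewrite in_hajosE => /or3P [fA|/imsetP [g gE ->]|/eqP ->].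
- have [fV f2] := hyp1 (subsetP (subD1set _ _) _ fA); split=> //.
  by apply/subsetP => x /(subsetP fV) /hajosV_V1.
- exact: hypergraph_merged.
- exact: hypergraph_estar.
Qed.

Definition glue c1 c2 z := if z \in V1 then c1 z else c2 z.

Lemma glue_lt K c1 c2 : (forall x, x \in V1 -> c1 x < K) ->
  (forall x, x \in V2 -> c2 x < K) -> forall x, x \in V -> glue c1 c2 x < K.
Proof.
move=> c1K c2K x; rewrite in_hajosV /glue => /andP [_ /orP [xV|xV]]; first by rewrite xV c1K.
by rewrite notin_V1 // c2K.
Qed.

Lemma bichromatic_glue1 c1 c2 f : f \subset V1 -> bichromatic c1 f -> bichromatic (glue c1 c2) f.
Proof.
by move=> /subsetP fV [x [y [xf yf cxy]]]; exists x, y; rewrite /glue !fV.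
Qed.

Lemma bichromatic_glue2 c1 c2 g : c1 v1 = c2 v2 -> g \subset V2 ->
  bichromatic c2 g -> bichromatic (glue c1 c2) (m @: g).
Proof.
move=> c12 /subsetP gV [x [y [xg yg cxy]]].
have glue_m z : z \in V2 -> glue c1 c2 (m z) = c2 z.
  move=> zV; rewrite /glue; have [->|zv2] := eqVneq z v2; first by rewrite merge_v2 v1V1.
  by rewrite merge_id // notin_V1.
by exists (m x), (m y); rewrite !imset_f // !glue_m ?gV.
Qed.

Lemma bichromatic_glue_estar c1 c2 x y : x \in e1 -> x != v1 -> y \in e2 -> y != v2 ->
  c1 x <> c2 y -> bichromatic (glue c1 c2) estar.
Proof.
move=> xe1 xv1 ye2 yv2 cxy; exists x, y; rewrite estar_e1 ?estar_e2 //.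
by rewrite /glue (subsetP e1_subset_V1 _ xe1) notin_V1 ?(subsetP e2_subset_V2).
Qed.

(* Permuting the colors of [c2] first makes [v1] and [v2] agree; if the edge
   [estar] would then still be monochromatic, a third color repairs it. *)
Lemma align_colorings K c1 c2 : 3 <= K ->
  (forall x, x \in V1 -> c1 x < K) -> (forall x, x \in V2 -> c2 x < K) ->
  bichromatic c1 e1 \/ bichromatic c2 e2 ->
  exists c2', [/\ forall x, x \in V2 -> c2' x < K, c1 v1 = c2' v2,
    forall g, bichromatic c2 g -> bichromatic c2' g &
    exists x y, [/\ x \in e1, x != v1, y \in e2, y != v2 & c1 x <> c2' y]].
Proof.
move=> K3 c1K c2K bic.
set a := c1 v1; set c2a := swap (c2 v2) a \o c2.
have aK : a < K by apply/c1K/v1V1.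
have c2aK x : x \in V2 -> c2a x < K by move=> xV; rewrite swap_lt ?c2K ?v2V2.
have c2av : a = c2a v2 by rewrite /c2a /= swapL.
have c2a_bic g : bichromatic c2 g -> bichromatic c2a g by apply/bichromatic_inj/swap_inj.
have [x [y [xe1 xv1 ye2 yv2 xya]]] : exists x y, [/\ x \in e1, x != v1, y \in e2, y != v2 &
    (c1 x != a) || (c2a y != a)].
  case: bic => [/bichromatic_other/(_ v1e1) [x xe1 cx]
               |/c2a_bic/bichromatic_other/(_ v2e2) [y ye2 cy]].
    have [y ye2 yv2] := e2_other; exists x, y; split=> //; last by apply/orP; left; apply/eqP.
    by apply/eqP => xv; apply: cx; rewrite xv.
  have [x xe1 xv1] := e1_other; exists x, y; split=> //; last first.
    by apply/orP; right; rewrite c2av; apply/eqP.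
  by apply/eqP => yv; apply: cy; rewrite yv.
have [cxy|cxy] := eqVneq (c1 x) (c2a y); last first.
  by exists c2a; split=> //; exists x, y; split=> //; apply/eqP.
have xa : c1 x != a by move: xya; rewrite cxy orbb.
have [g [g3 ga gx]] := third_color a (c1 x).
exists (swap (c1 x) g \o c2a); split.
- by move=> z zV; rewrite /= swap_lt ?c2aK ?c1K ?(subsetP e1_subset_V1) //; lia.
- by rewrite /= -c2av swap_id // eq_sym.
- by move=> h /c2a_bic; apply/bichromatic_inj/swap_inj.
- by exists x, y; split=> //=; rewrite -cxy swapL; apply/eqP; rewrite eq_sym.
Qed.

Lemma hajos_coloring K c1 c2 : 3 <= K ->
  (forall x, x \in V1 -> c1 x < K) -> (forall x, x \in V2 -> c2 x < K) ->
  bichromatic c1 e1 \/ bichromatic c2 e2 ->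
  exists c, [/\ forall x, x \in V -> c x < K, bichromatic c estar,
    forall f, f \subset V1 -> bichromatic c1 f -> bichromatic c f &
    forall g, g \subset V2 -> bichromatic c2 g -> bichromatic c (m @: g)].
Proof.
move=> K3 c1K c2K bic.
have [c2' [c2'K c12 c2'_bic [x [y [xe1 xv1 ye2 yv2 cxy]]]]] := align_colorings K3 c1K c2K bic.
exists (glue c1 c2'); split.
- exact: glue_lt.
- exact: bichromatic_glue_estar cxy.
- exact: bichromatic_glue1.
- by move=> g gV /c2'_bic; apply: bichromatic_glue2.
Qed.

Lemma B_neq_estar f : f \in B -> f != estar.
Proof.
case/imsetP => g /setD1P [_ /hyp2 [/subsetP gV2 _]] ->.
have [x xe1 xv1] := e1_other; apply/eqP => mg.
have := estar_e1 xe1 xv1; rewrite -mg => /imsetP [z zg xz].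
have [zv2|zv2] := eqVneq z v2; first by rewrite xz zv2 merge_v2 eqxx in xv1.
by move: (subsetP e1_subset_V1 _ xe1); rewrite xz merge_id // notin_V1 ?gV2.
Qed.

Lemma A_neq_estar f : f \in A -> f != estar.
Proof. by move=> fA; apply: contraNneq estar_not_subset_V1 => <-; apply: A_subset_V1. Qed.

(* A coloring of the join restricts to [G1] unless [e1] becomes monochromatic;
   then, as [G2] is not colorable, so does [e2] under [c \o m], and [estar]
   is monochromatic. *)
Lemma hajos_colorable_left K : ~ colorable V2 E2 K -> colorable V E K -> colorable V1 E1 K.
Proof.
move=> ncol2 [c [cV cE]]; exists c; split=> [x /hajosV_V1 /cV //|f fE1].
have [->|fe1] := eqVneq f e1; last by apply/cE/hajosE_A; rewrite !inE fe1.
have [//|mono1] := classic (bichromatic c e1).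
have mono2 : ~ bichromatic (c \o m) e2.
  move=> bic2; apply: ncol2; exists (c \o m); split=> [x /hajosV_merge /cV //|g gE2].
  have [->//|ge2] := eqVneq g e2.
  by apply/bichromatic_imset/cE/hajosE_B; rewrite !inE ge2.
have mono x : x \in estar -> c x = c v1.
  case/estar_cases => [/andP [xe1 _]|/andP [xe2 xv2]|-> //].
  - exact: monochromatic_eq mono1 v1e1 x xe1.
  - by have := monochromatic_eq mono2 v2e2 xe2; rewrite /= merge_id // merge_v2.
by have [x [y [xe ye []]]] := cE _ hajosE_estar; rewrite !mono.
Qed.

Lemma hajos_colorable_glue K c1 c2 (D : {set {set T}}) : D \subset E -> 3 <= K ->
  (forall x, x \in V1 -> c1 x < K) -> (forall x, x \in V2 -> c2 x < K) ->
  bichromatic c1 e1 \/ bichromatic c2 e2 ->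
  (forall f, f \in A -> f \in D -> bichromatic c1 f) ->
  (forall g, g \in E2 :\ e2 -> m @: g \in D -> bichromatic c2 g) -> colorable V D K.
Proof.
move=> /subsetP DE K3 c1K c2K bic c1A c2B.
have [c [cK cstar c1c c2c]] := hajos_coloring K3 c1K c2K bic.
exists c; split=> // f fD; move: (DE f fD); rewrite in_hajosE.
case/or3P=> [fA|/imsetP [g gE fg]|/eqP -> //].
  by apply: c1c (c1A f fA fD); apply: A_subset_V1.
by rewrite fg; apply: c2c (c2B g gE _); rewrite -?fg //; apply: E2_subset_V2.
Qed.

Definition onto_V1 z := if z \in V2 then v1 else z.
Definition onto_V2 z := if z \in V1 then v2 else z.

Lemma onto_V1_in x : x \in V -> onto_V1 x \in V1.
Proof. by rewrite in_hajosV /onto_V1 => /andP [_ /orP [xV|->]]; rewrite ?notin_V2 ?v1V1. Qed.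

Lemma onto_V2_in x : x \in V -> onto_V2 x \in V2.
Proof. by rewrite in_hajosV /onto_V2 => /andP [_ /orP [->|xV]]; rewrite ?notin_V1 ?v2V2. Qed.

Lemma onto_separate x y : x \in V -> y \in V -> x != y ->
  (onto_V1 x != onto_V1 y) || (onto_V2 x != onto_V2 y).
Proof.
rewrite !in_hajosV /onto_V1 /onto_V2 => /andP [xv2 xV] /andP [yv2 yV] xy.
case xV2: (x \in V2); case yV2: (y \in V2); move: xV yV; rewrite xV2 yV2 ?orbF // => xV yV.
- by rewrite !notin_V1 // xy orbT.
- by rewrite (notin_V1 xV2) yV xv2 orbT.
- by rewrite (notin_V1 yV2) xV [v2 == _]eq_sym yv2 orbT.
- by rewrite xy.
Qed.

Lemma onto_V1_estar x : x \in estar -> onto_V1 x \in e1.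
Proof.
rewrite /onto_V1; case/estar_cases => [/andP [xe1 _]|/andP [xe2 _]|->].
- by rewrite notin_V2 ?(subsetP e1_subset_V1).
- by rewrite (subsetP e2_subset_V2).
- by rewrite notin_V2 ?v1V1.
Qed.

Lemma onto_V2_estar x : x \in estar -> onto_V2 x \in e2.
Proof.
rewrite /onto_V2; case/estar_cases => [/andP [xe1 _]|/andP [xe2 _]|->].
- by rewrite (subsetP e1_subset_V1).
- by rewrite notin_V1 ?(subsetP e2_subset_V2).
- by rewrite v1V1.
Qed.

Lemma onto_V1_merged g x : g \subset V2 -> x \in m @: g -> onto_V1 x = v1.
Proof.
move=> /subsetP gV2 /imsetP [z zg ->]; rewrite /onto_V1.
have [->|zv2] := eqVneq z v2; first by rewrite merge_v2; case: ifP.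
by rewrite merge_id // gV2.
Qed.

Lemma onto_V2_merged g : g \subset V2 -> onto_V2 @: (m @: g) = g.
Proof.
move=> /subsetP gV2; rewrite -imset_comp -[RHS]imset_id; apply: eq_in_imset => z zg /=.
have [->|zv2] := eqVneq z v2; first by rewrite merge_v2 /onto_V2 v1V1.
by rewrite merge_id // /onto_V2 notin_V1 ?gV2.
Qed.

Lemma disjoint_paths_onto_V1 x y n : onto_V1 x != onto_V1 y ->
  disjoint_paths E x y n -> disjoint_paths E1 (onto_V1 x) (onto_V1 y) n.
Proof.
move=> sep; apply: (disjoint_paths_lift
  (lift := fun f e => (f \in A) && (e == f) || (f == estar) && (e == e1)) _ _ _ sep).
- by move=> f _ e /orP [/andP [/setD1P [_ fE1] /eqP ->]|/andP [_ /eqP ->]].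
- move=> f; rewrite in_hajosE => /or3P [fA|/imsetP [g /E2_subset_V2 gV2 ->]|/eqP ->] u u' uf u'f.
  + have /subsetP fV1 := A_subset_V1 fA.
    apply: (connect_in_edge (e := f)); rewrite ?fA ?eqxx //= /onto_V1 notin_V2 ?fV1 //.
  + by rewrite !(onto_V1_merged gV2) // connect0.
  + by apply: (connect_in_edge (e := e1)); rewrite ?eqxx ?orbT ?onto_V1_estar.
- move=> f g e _ _ fg /orP [/andP [fA /eqP ef]|/andP [/eqP fs /eqP e1f]];
    case/orP=> [/andP [gA /eqP eg]|/andP [/eqP gs /eqP e1g]].
  + by rewrite -ef -eg eqxx in fg.
  + by rewrite -ef e1g !inE eqxx in fA.
  + by rewrite -eg e1f !inE eqxx in gA.
  + by rewrite fs gs eqxx in fg.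
Qed.

Lemma disjoint_paths_onto_V2 x y n : onto_V2 x != onto_V2 y ->
  disjoint_paths E x y n -> disjoint_paths E2 (onto_V2 x) (onto_V2 y) n.
Proof.
move=> sep; apply: (disjoint_paths_lift
  (lift := fun f e => (f \in B) && (e == onto_V2 @: f) || (f == estar) && (e == e2)) _ _ _ sep).
- move=> f _ e /orP [/andP [/imsetP [g gE ->] /eqP ->]|/andP [_ /eqP ->] //].
  by rewrite onto_V2_merged ?E2_subset_V2 //; case/setD1P: gE.
- move=> f; rewrite in_hajosE => /or3P [fA|fB|/eqP ->] u u' uf u'f.
  + by have /subsetP fV1 := A_subset_V1 fA; rewrite /onto_V2 !fV1 // connect0.
  + by apply: (connect_in_edge (e := onto_V2 @: f)); rewrite ?fB ?eqxx ?imset_f.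
  + by apply: (connect_in_edge (e := e2)); rewrite ?eqxx ?orbT ?onto_V2_estar.
- move=> f g e _ _ fg /orP [/andP [/imsetP [f' f'E ff'] /eqP ef]|/andP [/eqP fs /eqP e2f]];
    case/orP=> [/andP [/imsetP [g' g'E gg'] /eqP eg]|/andP [/eqP gs /eqP e2g]].
  + move: ef eg; rewrite ff' gg' !onto_V2_merged ?E2_subset_V2 // => -> fg'.
    by rewrite ff' gg' fg' eqxx in fg.
  + move: ef; rewrite ff' onto_V2_merged ?E2_subset_V2 // e2g => ef.
    by rewrite -ef !inE eqxx in f'E.
  + move: eg; rewrite gg' onto_V2_merged ?E2_subset_V2 // e2f => eg.
    by rewrite -eg !inE eqxx in g'E.
  + by rewrite fs gs eqxx in fg.
Qed.

Lemma lambda_le_hajos k : lambda_le V1 E1 k -> lambda_le V2 E2 k -> lambda_le V E k.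
Proof.
move=> lam1 lam2 x y xV yV /eqP xy n paths.
case/orP: (onto_separate xV yV xy) => [sep|sep].
  apply: (lam1 _ _ (onto_V1_in xV) (onto_V1_in yV) (elimN eqP sep)).
  exact: disjoint_paths_onto_V1.
apply: (lam2 _ _ (onto_V2_in xV) (onto_V2_in yV) (elimN eqP sep)).
exact: disjoint_paths_onto_V2.
Qed.

(* A hyperpath of [G1] through [e1] is rerouted through [estar] and, to reach
   [v1], along a path of [G2 - e2] from [v2] to the vertex [y] of [e2]. *)
Lemma lambda_le_left_reroute k y : y \in e2 -> y != v2 ->
  connect (edge_rel (mem (E2 :\ e2))) v2 y -> lambda_le V E k -> lambda_le V1 E1 k.
Proof.
move=> ye2 yv2 v2y lam x z xV zV xz n paths.
have lift_e1 w : w \in e1 ->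
    connect (edge_rel (fun e => (e == estar) || (e \in B))) w y.
  move=> we1; have [->|wv1] := eqVneq w v1; last first.
    by apply: (connect_in_edge (e := estar)); [rewrite /= eqxx|apply: estar_e1|apply: estar_e2].
  have := connect_homo (h := m) (R' := edge_rel (fun e => (e == estar) || (e \in B))) _ v2y.
  rewrite merge_v2 merge_id //; apply=> u u' /existsP [g /and3P [gE ug u'g]].
  by apply/existsP; exists (m @: g); rewrite /= !imset_f // orbT.
apply: (lam x z (hajosV_V1 xV) (hajosV_V1 zV) xz).
apply: (disjoint_paths_lift (h := id)
  (lift := fun f e => (f \in A) && (e == f) || (f == e1) && ((e == estar) || (e \in B)))) paths.
- move=> f _ e /orP [/andP [fA /eqP ->]|/andP [_ /orP [/eqP ->|eB]]].
  + exact: hajosE_A.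
  + exact: hajosE_estar.
  + by rewrite in_hajosE eB orbT.
- move=> f fE1 u u' uf u'f; have [fe1|fe1] := eqVneq f e1; last first.
    by apply: (connect_in_edge (e := f)); rewrite ?inE ?fe1 ?fE1 ?eqxx.
  rewrite fe1 in uf u'f; apply: (connect_edge_relW (S := fun e => (e == estar) || (e \in B))).
    by move=> e Se /=; rewrite Se orbT.
  apply: connect_trans (lift_e1 u uf) _.
  by rewrite (sym_connect_sym (edge_rel_sym _)); apply: lift_e1.
- move=> f g e _ _ fg /orP [/andP [fA /eqP ef]|/andP [/eqP fe1 ee]];
    case/orP=> [/andP [gA /eqP eg]|/andP [/eqP ge1 ee']].
  + by rewrite -ef -eg eqxx in fg.
  + case/orP: ee' => [/eqP|/B_not_subset_V1]; rewrite ef; first by apply/eqP/A_neq_estar.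
    by rewrite A_subset_V1.
  + case/orP: ee => [/eqP|/B_not_subset_V1]; rewrite eg; first by apply/eqP/A_neq_estar.
    by rewrite A_subset_V1.
  + by rewrite fe1 ge1 eqxx in fg.
- exact/eqP.
Qed.

Lemma hajos_proper_sub V' E' : Defs.proper_sub V' E' V1 E1 -> e1 \in E' ->
  is_hypergraph (hajos_V V' V2 v1 v2) (hajos_E E' E2 v1 e1 v2 e2 b) ->
  Defs.proper_sub (hajos_V V' V2 v1 v2) (hajos_E E' E2 v1 e1 v2 e2 b) V E.
Proof.
move=> [_ sV sE ne] e1E' hypE'; split=> //.
- by apply/setSD/setSU.
- by apply/setSU/setSU/setSD.
case=> eV eE; apply: ne; congr pair; apply/eqP; rewrite eqEsubset ?sV ?sE //=.
- apply/subsetP => z zV1; move: (hajosV_V1 zV1); rewrite -eV !inE => /andP [_ /orP [//|]].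
  by rewrite notin_V2.
- apply/subsetP => f fE1; have [->//|fe1] := eqVneq f e1.
  have fA : f \in A by rewrite !inE fe1.
  move: (hajosE_A fA); rewrite -eE !in_setU in_set1 -orbA => /or3P [/setD1P [] //|fB|/eqP fs].
    by move: (B_not_subset_V1 fB); rewrite A_subset_V1.
  by move: estar_not_subset_V1; rewrite -fs A_subset_V1.
Qed.

Lemma hajosV_swap : swap v1 v2 @: V = hajos_V V2 V1 v2 v1.
Proof.
apply/setP => z; rewrite mem_imset_invol; last exact: swapK.
rewrite in_hajosV /hajos_V !inE /swap.
have [->|zv1] := eqVneq z v1; first by rewrite eqxx.
have [->|zv2] := eqVneq z v2; first by rewrite v1V1 v2V2 v1_neq_v2.
by rewrite zv2 orbC.
Qed.

Lemma hajosE_swap : edge_image (swap v1 v2) E = hajos_E E2 E1 v2 e2 v1 e1 b.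
Proof.
rewrite /edge_image /hajos_E !imsetU imset_set1 [_ :|: [set Defs.merge v2 v1 @: _ | _ in _]]setUC.
congr (_ :|: _ :|: _).
- apply: eq_in_imset => e /setD1P [_ /hyp1 [/subsetP eV1 _]].
  apply: eq_in_imset => z ze; rewrite /swap /Defs.merge.
  have [//|zv1] := eqVneq z v1.
  by have [zv2|//] := eqVneq z v2; move: (notin_V2 (eV1 z ze)); rewrite zv2 v2V2.
- rewrite -imset_comp -[RHS]imset_id; apply: eq_in_imset => g /setD1P [_ /hyp2 [/subsetP gV2 _]] /=.
  rewrite -imset_comp -[RHS]imset_id; apply: eq_in_imset => z zg /=.
  rewrite /swap /Defs.merge; have [->|zv2] := eqVneq z v2; first by rewrite eqxx.
  have [zv1|_] := eqVneq z v1; last by rewrite (negbTE zv2).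
  by move: (notin_V1 (gV2 z zg)); rewrite zv1 v1V1.
- congr [set _]; apply/setP => z; rewrite mem_imset_invol; last exact: swapK.
  rewrite /swap /hajos_estar.
  have [->|zv1] := eqVneq z v1; [|have [->|zv2] := eqVneq z v2];
    case: b; rewrite ?inE ?eqxx ?orbT ?orbF //= ?v1_neq_v2 ?(eq_sym v2 v1) ?v1_neq_v2 //.
  all: by rewrite (negbTE zv1) (negbTE zv2) /= ?orbF orbC.
Qed.

Lemma in_Ck_hajos_swap k : in_Ck k V E ->
  in_Ck k (hajos_V V2 V1 v2 v1) (hajos_E E2 E1 v2 e2 v1 e1 b).
Proof. by move/(in_Ck_image (swapK v1 v2)); rewrite hajosV_swap hajosE_swap. Qed.

Section CriticalFactors.
Variable k : nat.
Hypothesis k3 : 3 <= k.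
Hypotheses (crit1 : critical V1 E1 k) (crit2 : critical V2 E2 k).

Lemma hajos_not_colorable : ~ colorable V E k.
Proof.
have /critical_iff [_ ncol1 _] := crit1; have /critical_iff [_ ncol2 _] := crit2.
by move/(hajos_colorable_left ncol2).
Qed.

Lemma hajos_colorable_succ : colorable V E k.+1.
Proof.
have /critical_iff [[c1 [c1K c1E]] _ _] := crit1.
have /critical_iff [[c2 [c2K c2E]] _ _] := crit2.
apply: (hajos_colorable_glue (c1 := c1) (c2 := c2) (subxx _)) => //; first lia.
- by left; apply: c1E.
- by move=> f /setD1P [_ /c1E].
- by move=> g /setD1P [_ /c2E].
Qed.

Lemma hajos_colorable_delete f : f \in E -> colorable V (E :\ f) k.
Proof.
have [c1 [c1K c1E]] := critical_delete_edge crit1 hyp1 e1E1.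
have [c2 [c2K c2E]] := critical_delete_edge crit2 hyp2 e2E2.
rewrite in_hajosE => /or3P [/setD1P [fe1 fE1]|/imsetP [g /setD1P [ge2 gE2] ->]|/eqP ->].
- have [c1' [c1'K c1'E]] := critical_delete_edge crit1 hyp1 fE1.
  apply: (hajos_colorable_glue (c1 := c1') (c2 := c2) (subD1set _ _)) => //.
  + by left; apply: c1'E; rewrite !inE eq_sym fe1.
  + by move=> h /setD1P [_ hE1] /setD1P [hf _]; apply: c1'E; rewrite !inE hf.
  + by move=> g /c2E.
- have [c2' [c2'K c2'E]] := critical_delete_edge crit2 hyp2 gE2.
  apply: (hajos_colorable_glue (c1 := c1) (c2 := c2') (subD1set _ _)) => //.
  + by right; apply: c2'E; rewrite !inE eq_sym ge2.
  + by move=> h /c1E.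
  + move=> h /setD1P [_ hE2] /setD1P [hg _]; apply: c2'E; rewrite !inE hE2 andbT.
    by apply: contraNneq hg => ->.
set c2' := swap (c2 v2) (c1 v1) \o c2.
have c2'K x : x \in V2 -> c2' x < k by move=> xV2; rewrite swap_lt ?c1K ?c2K ?v1V1 ?v2V2.
have c12 : c1 v1 = c2' v2 by rewrite /c2' /= swapL.
exists (glue c1 c2'); split=> [|h /setD1P [hs]]; first exact: glue_lt.
rewrite in_hajosE (negbTE hs) orbF => /orP [hA|/imsetP [g gE ->]].
- exact/bichromatic_glue1/c1E/hA/A_subset_V1.
- by apply/bichromatic_glue2/bichromatic_inj/c2E/gE; rewrite ?E2_subset_V2 //; apply: swap_inj.
Qed.

Lemma hajos_vertex_in_edge z : z \in V -> exists2 f, f \in E & z \in f.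
Proof.
rewrite in_hajosV => /andP [zv2 /orP [zV1|zV2]].
- have [->|zv1] := eqVneq z v1.
    have [|f fA v1f] := critical_vertex_in_other_edge crit1 hyp1 _ e1E1 v1e1; first lia.
    by exists f => //; apply: hajosE_A.
  have [|f fE1 zf] := critical_vertex_in_edge crit1 hyp1 _ zV1; first lia.
  have [fe1|fe1] := eqVneq f e1; first by exists estar; rewrite ?hajosE_estar ?estar_e1 -?fe1.
  by exists f => //; apply: hajosE_A; rewrite !inE fe1.
- have [|g gE2 zg] := critical_vertex_in_edge crit2 hyp2 _ zV2; first lia.
  have [ge2|ge2] := eqVneq g e2; first by exists estar; rewrite ?hajosE_estar ?estar_e2 -?ge2.
  exists (m @: g); first by apply: hajosE_B; rewrite !inE ge2.
  by rewrite -(merge_id zv2) imset_f.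
Qed.

Lemma critical_hajos : critical V E k.
Proof.
apply/critical_iff; split; [exact: hajos_colorable_succ|exact: hajos_not_colorable|].
move=> V' E' [hypE' sV sE ne].
have [sEE'|/subsetPn [f fE fE']] := boolP (E \subset E'); last first.
  apply: colorableS (hajos_colorable_delete fE) sV _; apply/subsetP => h hE'.
  by rewrite in_setD1 (subsetP sE _ hE') andbT; apply: contraNneq fE' => <-.
have eE : E' = E by apply/eqP; rewrite eqEsubset sE.
have /subsetPn [z zV zV'] : ~~ (V \subset V').
  by apply/negP => sV'; apply: ne; rewrite eE; congr pair; apply/eqP; rewrite eqEsubset sV.
have [f fE zf] := hajos_vertex_in_edge zV.
by rewrite -eE in fE; have [/subsetP fV' _] := hypE' f fE; rewrite fV' in zV'.
Qed.

End CriticalFactors.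

Section CriticalJoin.
Variable k : nat.
Hypothesis k3 : 3 <= k.
Hypothesis critG : critical V E k.

Lemma colorable_delete_estar : colorable V (E :\ estar) k.
Proof. exact: critical_delete_edge critG hypergraph_hajos hajosE_estar. Qed.

Lemma colorable_right_delete_e2 : colorable V2 (E2 :\ e2) k.
Proof.
have [c [cK cE]] := colorable_delete_estar.
exists (c \o m); split=> [x /hajosV_merge /cK //|g gE].
by apply/bichromatic_imset/cE; rewrite in_setD1 hajosE_B // B_neq_estar // imset_f.
Qed.

Lemma colorable_left_delete_e1 : colorable V1 A k.
Proof.
have [c [cK cE]] := colorable_delete_estar.
exists c; split=> [x /hajosV_V1 /cK //|f fA].
by apply: cE; rewrite in_setD1 hajosE_A // A_neq_estar.
Qed.

Lemma left_not_colorable : ~ colorable V1 E1 k.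
Proof.
move=> [c1 [c1K c1E]]; have [c2 [c2K c2E]] := colorable_right_delete_e2.
case/critical_iff: critG => _ [].
apply: (hajos_colorable_glue (c1 := c1) (c2 := c2) (subxx _)) => //.
- by left; apply: c1E.
- by move=> f /setD1P [_ /c1E].
- by move=> g /c2E.
Qed.

(* The color [k] is unused by [c], so giving it to [v1] makes [e1] bichromatic. *)
Lemma left_colorable_succ : colorable V1 E1 k.+1.
Proof.
have [c [cK cA]] := colorable_left_delete_e1.
exists (fun z => if z == v1 then k else c z); split.
  by move=> x xV1; case: ifP => // _; apply/ltnW/cK.
move=> f fE1; have [->|fe1] := eqVneq f e1.
  have [x xe1 xv1] := e1_other; exists v1, x; rewrite eqxx (negbTE xv1); split=> //.
  by move=> cx; move: (cK x (subsetP e1_subset_V1 _ xe1)); rewrite -cx ltnn.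
have fA : f \in A by rewrite !inE fe1.
have [x [y [xf yf cxy]]] := cA f fA; have /subsetP fV1 := A_subset_V1 fA.
have ck z : z \in f -> c z != k by move=> zf; rewrite ltn_eqF ?cK ?fV1.
exists x, y; split=> //.
have [xv1|xv1] := eqVneq x v1; have [yv1|yv1] := eqVneq y v1.
- by move: cxy; rewrite xv1 yv1.
- by apply/eqP; rewrite eq_sym ck.
- exact/eqP/ck.
- exact: cxy.
Qed.

Lemma colorable_proper_sub_without_e1 V' E' :
  Defs.proper_sub V' E' V1 E1 -> e1 \notin E' -> colorable V' E' k.
Proof.
move=> [_ sV sE _] e1E'; apply: colorableS colorable_left_delete_e1 sV _.
apply/subsetP => f fE'; rewrite in_setD1 (subsetP sE _ fE') andbT.
by apply: contraNneq e1E' => <-.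
Qed.

Lemma lambda_le_left : ~ colorable V2 E2 k -> lambda_le V E k -> lambda_le V1 E1 k.
Proof.
move=> ncol2; have [|y /andP [ye2 yv2] v2y] :=
  uncolorable_connect_other hyp2 _ e2E2 v2e2 ncol2 colorable_right_delete_e2; first lia.
exact: lambda_le_left_reroute ye2 yv2 v2y.
Qed.

End CriticalJoin.

End HajosJoin.

(** * The class C_k *)

Section HajosCk.
Variables (T : finType) (V1 V2 : {set T}) (E1 E2 : {set {set T}}).
Variables (v1 v2 : T) (e1 e2 : {set T}) (b : bool) (k : nat).
Hypotheses (hyp1 : is_hypergraph V1 E1) (hyp2 : is_hypergraph V2 E2).
Hypothesis disjV : [disjoint V1 & V2].
Hypotheses (e1E1 : e1 \in E1) (v1e1 : v1 \in e1) (e2E2 : e2 \in E2) (v2e2 : v2 \in e2).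
Hypothesis k3 : 3 <= k.

Local Notation V := (hajos_V V1 V2 v1 v2).
Local Notation E := (hajos_E E1 E2 v1 e1 v2 e2 b).

Lemma in_Ck_hajos : in_Ck k V1 E1 -> in_Ck k V2 E2 -> in_Ck k V E.
Proof.
move=> [crit1 lam1] [crit2 lam2]; split; first exact: critical_hajos.
exact: lambda_le_hajos.
Qed.

(* A proper subhypergraph of [G1] containing [e1] yields a proper
   subhypergraph of the join, whose colorings restrict back. *)
Lemma in_Ck_hajos_left : in_Ck k V E -> ~ colorable V2 E2 k -> in_Ck k V1 E1.
Proof.
move=> [critG lamG] ncol2.
split; last exact: (lambda_le_left hyp1 hyp2 disjV e1E1 v1e1 e2E2 v2e2 k3 critG).
apply/critical_iff; split.
- exact: (left_colorable_succ hyp1 hyp2 disjV e1E1 v1e1 e2E2 v2e2 critG).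
- exact: (left_not_colorable hyp1 hyp2 disjV e1E1 v1e1 e2E2 v2e2 k3 critG).
move=> V' E' sub; have [e1E'|e1E'] := boolP (e1 \in E'); last first.
  exact: (colorable_proper_sub_without_e1 hyp1 hyp2 disjV e1E1 v1e1 e2E2 v2e2 critG sub).
have [hypE' sV _ _] := sub.
have disjV' : [disjoint V' & V2] by apply: disjointWl sV disjV.
have hypG' := hypergraph_hajos (b := b) hypE' hyp2 disjV' e1E' v1e1 e2E2 v2e2.
have /critical_iff [_ _ colsub] := critG.
have colG' := colsub _ _ (hajos_proper_sub hyp1 hyp2 disjV e1E1 v1e1 e2E2 v2e2 sub e1E' hypG').
exact: (hajos_colorable_left hypE' hyp2 disjV' e1E' v1e1 e2E2 v2e2 ncol2 colG').
Qed.

End HajosCk.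

Theorem claim2 (k : nat) (hk : 3 <= k) (T : finType)
  (V1 V2 : {set T}) (E1 E2 : {set {set T}})
  (v1 v2 : T) (e1 e2 : {set T}) (b : bool) :
  is_hypergraph V1 E1 -> is_hypergraph V2 E2 ->
  [disjoint V1 & V2] ->
  e1 \in E1 -> v1 \in e1 -> e2 \in E2 -> v2 \in e2 ->
  in_Ck k (hajos_V V1 V2 v1 v2) (hajos_E E1 E2 v1 e1 v2 e2 b) <->
  in_Ck k V1 E1 /\ in_Ck k V2 E2.
Proof.
move=> hyp1 hyp2 disjV e1E1 v1e1 e2E2 v2e2.
have disjV' : [disjoint V2 & V1] by rewrite disjoint_sym.
split=> [CkG|[Ck1 Ck2]]; last exact: in_Ck_hajos.
have CkG' := in_Ck_hajos_swap hyp1 hyp2 disjV e1E1 v1e1 e2E2 v2e2 CkG.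
have ncol1 := left_not_colorable hyp1 hyp2 disjV e1E1 v1e1 e2E2 v2e2 hk CkG.1.
have ncol2 := left_not_colorable hyp2 hyp1 disjV' e2E2 v2e2 e1E1 v1e1 hk CkG'.1.
split; first exact: in_Ck_hajos_left hyp1 hyp2 disjV e1E1 v1e1 e2E2 v2e2 hk CkG ncol2.
exact: in_Ck_hajos_left hyp2 hyp1 disjV' e2E2 v2e2 e1E1 v1e1 hk CkG' ncol1.
Qed.
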